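(* Let $I$ be a compact metric space, $\mu$ a non-negative finite Borel measure on $I$, $N\ge2$ and $N'\le N$ natural numbers, and $s:\mathcal{G}\to[0,\infty)$ a surplus function. Define $S:I^{N!}\to\mathbb{R}$ by $S(i_1,\dots,i_{N!})=\hat s([i_1,\dots,i_{N!}])$ and $\hat{\mathcal{U}}=\{u\in L^1(I,\mu):\sum_{k=1}^{N!}u(i_k)\ge(N-1)!\,S(i_1,\dots,i_{N!})\ \forall i_1,\dots,i_{N!}\in I\}$, $\mathcal{U}_n=\{u\in L^1(I,\mu):\sum_{k=1}^nu(i_k)\ge s([i_1,\dots,i_n])\ \forall i_1,\dots,i_n\in I\}$ for $N'\le n\le N$, and $\mathcal{U}=\{u\in L^1(I,\mu):\sum_{i\in G}u(i)\ge s(G)\ \forall G\in\mathcal{G}\}$. Then $\hat{\mathcal{U}}=\mathcal{U}=\bigcap_{n=N'}^N\mathcal{U}_n$.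
   Context: For $n\in\mathbb{N}$, $I^n/\sim_n$ is the quotient of $I^n$ by permutation of coordinates, classes written $[i_1,\dots,i_n]$; $\mathcal{G}_n=I^n/\sim_n$ (multisets of size $n$) and $\mathcal{G}=\bigcup_{n=N'}^N\mathcal{G}_n$; $s_n=s|_{\mathcal{G}_n}$. For $G=[i_1,\dots,i_n]$, $\sum_{i\in G}u(i)=\sum_{k=1}^nu(i_k)$. For $N'\le n\le N$, $K_n\subset I^{N!}/\sim_{N!}$ is the set of classes $[i_1,\dots,i_{N!}]$ such that for each $i\in I$, $|\{k:i_k=i\}|$ is divisible by $N!/n$; $P_n:K_n\to\mathcal{G}_n$ sends $[\underbrace{j_1,\dots,j_1}_{N!/n},\dots,\underbrace{j_n,\dots,j_n}_{N!/n}]$ to $[j_1,\dots,j_n]$. $\hat s_n=s_n\circ P_n$ on $K_n$ and $0$ off $K_n$; $\hat s=\max_{N'\le n\le N}\frac{N}{n}\hat s_n$. *)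

From HB Require Import structures.
From mathcomp Require Import all_boot all_order all_algebra all_fingroup.
From mathcomp Require Import all_classical all_reals all_analysis.
Set Implicit Arguments. Unset Strict Implicit. Unset Printing Implicit Defensive.
Import Order.TTheory GRing.Theory Num.Theory.
Local Open Scope ring_scope.
Local Open Scope classical_set_scope.

(* A (nonempty, i.e. pointed) metric space: measurable types in
   MathComp-Analysis are always pointed. *)
#[short(type="pointedMetricType")]
HB.structure Definition PointedMetric (K : numDomainType) :=
  {T of Pointed T & Metric K T}.

Definition borel (R : realType) (I : pointedMetricType R) :=
  g_sigma_algebraType (@open I).

(* Multisets of size n ([i_1,...,i_n] in I^n/~_n) are represented by
   n-tuples ('I_n -> I); a function on multisets is a function on tuples
   invariant under permutations of the coordinates. *)
Definition sym_fun (I : Type) (R : Type) (n : nat) (f : ('I_n -> I) -> R) :=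
  forall (sigma : 'S_n) (y : 'I_n -> I), f (y \o sigma) = f y.

Definition msum (R : realType) (I : Type) (u : I -> R) (n : nat)
  (y : 'I_n -> I) : R := \sum_(k < n) u (y k).

(* x : I^{N!} is (a representative of) the class
   [j_1,...,j_1, ..., j_n,...,j_n] (each j_k repeated N!/n times):
   there is a map f : 'I_(N!) -> 'I_n with x = y o f whose fibres all
   have cardinality N!/n.  This says exactly that [x] \in K_n and
   P_n [x] = [y_0,...,y_{n-1}]. *)
Definition replicates (I : Type) (N n : nat) (y : 'I_n -> I)
  (x : 'I_(N`!) -> I) : Prop :=
  exists f : 'I_(N`!) -> 'I_n,
    (forall k, x k = y (f k)) /\
    (forall j : 'I_n, #|[set k | f k == j]| = (N`! %/ n)%N).

Arguments replicates {I} N {n} y x.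

(* \hat s_n = s_n o P_n on K_n, and 0 off K_n. *)
Definition shat_n (R : realType) (I : Type) (N : nat)
  (s : forall n : nat, ('I_n -> I) -> R) (n : nat) (x : 'I_(N`!) -> I) : R :=
  match pselect (exists y : 'I_n -> I, replicates N y x) with
  | left h => s n (projT1 (cid h))
  | right _ => 0
  end.

Arguments shat_n {R I} N s n x.

(* \hat s = max_{N' <= n <= N} (N/n) \hat s_n  (the terms are >= 0 when s >= 0,
   so taking 0 as the neutral element of the max does not change it). *)
Definition shat (R : realType) (I : Type) (N' N : nat)
  (s : forall n : nat, ('I_n -> I) -> R) (x : 'I_(N`!) -> I) : R :=
  \big[Num.max/0]_(N' <= n < N.+1) (N%:R / n%:R * shat_n N s n x).

Arguments shat {R I} N' N s x.

Definition Uhat (R : realType) (I : pointedMetricType R) (N' N : nat)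
  (mu : {measure set (borel I) -> \bar R})
  (s : forall n : nat, ('I_n -> I) -> R) : set (I -> R) :=
  [set u | mu.-integrable [set: borel I] (fun x => (u x)%:E) /\
    forall x : 'I_(N`!) -> I,
      (N.-1)`!%:R * shat N' N s x <= msum u x].

Definition U_n (R : realType) (I : pointedMetricType R)
  (mu : {measure set (borel I) -> \bar R})
  (s : forall n : nat, ('I_n -> I) -> R) (n : nat) : set (I -> R) :=
  [set u | mu.-integrable [set: borel I] (fun x => (u x)%:E) /\
    forall y : 'I_n -> I, s n y <= msum u y].

(* U : constraint for every G in \mathcal G = \bigcup_{n=N'}^N G_n *)
Definition U (R : realType) (I : pointedMetricType R) (N' N : nat)
  (mu : {measure set (borel I) -> \bar R})
  (s : forall n : nat, ('I_n -> I) -> R) : set (I -> R) :=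
  [set u | mu.-integrable [set: borel I] (fun x => (u x)%:E) /\
    forall n : nat, (N' <= n <= N)%N -> forall y : 'I_n -> I, s n y <= msum u y].

From Pilot Require Import Defs.
From HB Require Import structures.
From mathcomp Require Import all_boot all_order all_algebra all_fingroup.
From mathcomp Require Import all_classical all_reals all_analysis.
Set Implicit Arguments.
Unset Strict Implicit.
Unset Printing Implicit Defensive.
Import Order.TTheory GRing.Theory Num.Theory.
Local Open Scope ring_scope.

(** If [x] replicates [y], i.e. repeats each entry of [y] exactly [N!/n]
    times, then [msum u x = (N!/n) msum u y], and [x] determines [y] up to
    order, so [shat_n N s n x = s n y] for symmetric [s].  As
    [(N-1)! * N/n = N!/n], the [n]-th term of the maximum in the constraint of
    [Uhat] at [x] is the constraint of [U_n] at [y] scaled by [N!/n], and every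
    [y] is replicated by some [x] because [n] divides [N!].  The terms at
    non-replicating [x] vanish, which is harmless since every [u] in [U] is
    nonnegative ([s N] at a constant tuple is [>= 0]). *)

Lemma card_classic_set (T : finType) (P : pred T) :
  #|[set x | P x]%classic| = #|[set x | P x]|.
Proof. by apply: eq_card => x; rewrite inE; apply/idP/idP => /asboolP. Qed.

Lemma equipartition_exists p n : (n %| p)%N ->
  exists f : 'I_p -> 'I_n, forall j, #|[set k | f k == j]| = (p %/ n)%N.
Proof.
move=> dvd_np; set m := (p %/ n)%N.
have card_p : p = #|{: 'I_n * 'I_m}| by rewrite card_prod !card_ord mulnC divnK.
pose g k := enum_val (cast_ord card_p k).
have g_bij : bijective g.
  apply: inj_card_bij; last by rewrite card_ord -card_p.
  by move=> k1 k2 /enum_val_inj/cast_ord_inj.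
exists (fun k => (g k).1) => j.
have -> : [set k | (g k).1 == j] = g @^-1: finset.setX [set j] [set: 'I_m].
  by apply/setP => k; rewrite !inE andbT.
rewrite (on_card_preimset (onW_bij _ g_bij)).
by rewrite finset.cardsX cards1 cardsT card_ord mul1n.
Qed.

Lemma sum_equipartition (V : nmodType) p n (f : 'I_p -> 'I_n) c
    (F : 'I_n -> V) :
  (forall j, #|[set k | f k == j]| = c) ->
  \sum_(k < p) F (f k) = (\sum_(j < n) F j) *+ c.
Proof.
move=> card_fibre; rewrite -sumrMnl (partition_big f xpredT) //=.
apply: eq_bigr => j _.
rewrite (eq_bigr (fun _ => F j)); last by move=> k /eqP->.
rewrite sumr_const -(card_fibre j); congr (_ *+ _).
by apply: eq_card => k; rewrite inE.
Qed.

Section Replication.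
Variables (T : Type) (N n : nat).

Lemma replicates_exists (y : 'I_n -> T) : (n %| N`!)%N ->
  exists x, replicates N y x.
Proof.
move=> /equipartition_exists[f card_fibre].
by exists (y \o f), f; split=> // j; rewrite card_classic_set.
Qed.

Lemma msum_replicates (R : realType) (u : T -> R) (y : 'I_n -> T) x :
  replicates N y x -> Defs.msum u x = Defs.msum u y *+ (N`! %/ n).
Proof.
case=> f [x_eq card_fibre]; rewrite /Defs.msum; under eq_bigr do rewrite x_eq.
by apply: (sum_equipartition (f := f) (u \o y)) => j; rewrite -card_classic_set.
Qed.

End Replication.

Lemma count_mktuple (T : eqType) n (y : 'I_n -> T) (a : pred T) :
  count a (mktuple y) = (\sum_(j < n) a (y j))%N.
Proof.
rewrite -sum1_count big_mkcond /= big_map big_enum /=.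
by apply: eq_bigr => j _; case: (a (y j)).
Qed.

Lemma replicates_perm (T : eqType) N n (y y' : 'I_n -> T) x :
  (0 < N`! %/ n)%N -> replicates N y x -> replicates N y' x ->
  exists sigma : 'S_n, y' = y \o sigma.
Proof.
move=> c_gt0 rep_y rep_y'.
have count_x (z : 'I_n -> T) (a : pred T) : replicates N z x ->
    \sum_(k < N`!) (a (x k) : nat) = count a (mktuple z) *+ (N`! %/ n).
  case=> f [x_eq card_fibre]; rewrite count_mktuple.
  under eq_bigr do rewrite x_eq.
  by apply: (sum_equipartition (f := f) (fun j => a (z j) : nat)) => j;
    rewrite -card_classic_set.
have /tuple_permP[sigma /val_inj y'_eq] : perm_eq (mktuple y') (mktuple y).
  apply/seq.permP => a; apply/eqP; rewrite -(eqn_pmul2r c_gt0).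
  have natmulE m c : m *+ c = (m * c)%N by rewrite -mulr_natr natn.
  by rewrite -!natmulE -(count_x y') // -count_x.
exists sigma; apply/funext => i /=.
by rewrite -[y' i](tnth_mktuple y') y'_eq !tnth_mktuple.
Qed.

Lemma fact_pred_mul_ratio (R : numFieldType) N n : (0 < n)%N -> (n <= N)%N ->
  (N.-1)`!%:R * (N%:R / n%:R) = (N`! %/ n)%:R :> R.
Proof.
move=> n_gt0 n_le_N; have N_gt0 : (0 < N)%N := leq_trans n_gt0 n_le_N.
rewrite natf_div ?dvdn_fact ?n_gt0 // -(prednK N_gt0) factS prednK //.
by rewrite natrM mulrA [_ * N%:R]mulrC.
Qed.

Section ShatN.
Variables (R : realType) (N : nat).

Lemma shat_nP (T : Type) (s : forall n, ('I_n -> T) -> R) n x :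
  (exists2 y, replicates N y x & shat_n N s n x = s n y) \/ shat_n N s n x = 0.
Proof.
rewrite /shat_n; case: pselect => [rep|_]; last by right.
by left; exists (projT1 (cid rep)); first exact: projT2 (cid rep).
Qed.

Lemma shat_n_replicates (T : eqType) (s : forall n, ('I_n -> T) -> R) n y x :
  sym_fun (s n) -> (0 < N`! %/ n)%N -> replicates N y x ->
  shat_n N s n x = s n y.
Proof.
move=> s_sym c_gt0 rep_y; rewrite /shat_n.
case: pselect => [rep|[]]; last by exists y.
by have [sigma ->] := replicates_perm c_gt0 rep_y (projT2 (cid rep)).
Qed.

Variables (T : Type) (N' : nat) (s : forall n, ('I_n -> T) -> R).
Arguments s : clear implicits.

Lemma shat_n_le_shat n x : (N' <= n <= N)%N ->
  N%:R / n%:R * shat_n N s n x <= shat N' N s x.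
Proof.
move=> n_range; apply: (le_bigmax_seq _ n xpredT) => //.
by rewrite mem_index_iota ltnS.
Qed.

Lemma shat_le x b : 0 <= b ->
  (forall n, (N' <= n <= N)%N -> N%:R / n%:R * shat_n N s n x <= b) ->
  shat N' N s x <= b.
Proof.
move=> b_ge0 le_b; rewrite /shat big_nat_cond; apply: bigmax_le => // n.
by rewrite andbT ltnS; apply: le_b.
Qed.

End ShatN.

Lemma msum_const (R : realType) (T : Type) (u : T -> R) n i :
  Defs.msum u (fun _ : 'I_n => i) = u i *+ n.
Proof. by rewrite /Defs.msum sumr_const card_ord. Qed.

Section Constraints.
Variables (R : realType) (T : eqType) (N' N : nat).
Variables (s : forall n, ('I_n -> T) -> R) (u : T -> R).
Arguments s : clear implicits.
Hypothesis N'_gt0 : (0 < N')%N.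

Lemma range_bounds n :
  (N' <= n <= N)%N -> [/\ (0 < n)%N, (n <= N)%N & (0 < N`! %/ n)%N].
Proof.
case/andP=> N'_le_n n_le_N; have n_gt0 := leq_trans N'_gt0 N'_le_n.
by rewrite divn_gt0 // (leq_trans n_le_N (fact_geq N)).
Qed.

Lemma Uhat_constraints_U :
  (forall n, (N' <= n <= N)%N -> sym_fun (s n)) ->
  (forall x, (N.-1)`!%:R * shat N' N s x <= Defs.msum u x) ->
  forall n, (N' <= n <= N)%N -> forall y, s n y <= Defs.msum u y.
Proof.
move=> s_sym u_hat n n_range y.
have [n_gt0 n_le_N c_gt0] := range_bounds n_range.
have [x rep_y] : exists x, replicates N y x.
  by apply: replicates_exists; rewrite dvdn_fact ?n_gt0.
rewrite -(ler_pMn2r c_gt0) -(msum_replicates _ rep_y).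
apply: le_trans (u_hat x).
rewrite -[s n y *+ _]mulr_natl -fact_pred_mul_ratio // -mulrA ler_wpM2l //.
by rewrite -(shat_n_replicates (s_sym n n_range) c_gt0 rep_y) shat_n_le_shat.
Qed.

Lemma U_constraints_Uhat : (forall i, 0 <= u i) ->
  (forall n, (N' <= n <= N)%N -> forall y, s n y <= Defs.msum u y) ->
  forall x, (N.-1)`!%:R * shat N' N s x <= Defs.msum u x.
Proof.
move=> u_ge0 u_U x.
have fact_gt0 : 0 < (N.-1)`!%:R :> R by rewrite ltr0n fact_gt0.
have msum_ge0 : 0 <= Defs.msum u x by apply: sumr_ge0.
rewrite -ler_pdivlMl //; apply: shat_le => [|n n_range].
  by rewrite mulr_ge0 // invr_ge0 ltW.
rewrite ler_pdivlMl //; have [n_gt0 n_le_N c_gt0] := range_bounds n_range.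
case: (shat_nP s n x) => [[y rep_y ->]|->]; last by rewrite !mulr0.
rewrite mulrA fact_pred_mul_ratio // (msum_replicates _ rep_y) mulr_natl.
by rewrite ler_pMn2r // u_U.
Qed.

End Constraints.

Local Open Scope classical_set_scope.

Lemma U_eq_bigcap_U_n (R : realType) (I : pointedMetricType R)
  (mu : {measure set (borel I) -> \bar R}) N' N
  (s : forall n, ('I_n -> I) -> R) :
  (N' <= N)%N ->
  U N' N mu s = \bigcap_(n in [set n : nat | (N' <= n <= N)%N]) U_n mu s n.
Proof.
move=> N'_le_N; apply/seteqP; split => u.
  by case=> u_int u_ok n n_range; split => //; apply: u_ok.
move=> u_U_n; split; first by case: (u_U_n N) => //=; rewrite N'_le_N leqnn.
by move=> n n_range y; case: (u_U_n n n_range).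
Qed.

Theorem lemma6 (R : realType) (I : pointedMetricType R)
  (mu : {measure set (borel I) -> \bar R})
  (N' N : nat) (s : forall n : nat, ('I_n -> I) -> R) :
  compact [set: I] ->
  (mu [set: borel I] < +oo)%E ->
  (2 <= N)%N -> (1 <= N')%N -> (N' <= N)%N ->
  (forall n, (N' <= n <= N)%N -> sym_fun (s n)) ->
  (forall n, (N' <= n <= N)%N -> forall y : 'I_n -> I, 0 <= s n y) ->
  Uhat N' N mu s = U N' N mu s /\
  U N' N mu s = \bigcap_(n in [set n : nat | (N' <= n <= N)%N]) U_n mu s n.
Proof.
move=> _ _ _ N'_gt0 N'_le_N s_sym s_ge0; split; last exact: U_eq_bigcap_U_n.
have N_range : (N' <= N <= N)%N by rewrite N'_le_N leqnn.
apply/seteqP; split => u [u_int u_ok]; split => //.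
  exact: Uhat_constraints_U.
apply: U_constraints_Uhat => // i.
rewrite -(pmulrn_lge0 _ (leq_trans N'_gt0 N'_le_N)) -msum_const.
exact: le_trans (s_ge0 N N_range _) (u_ok N N_range _).
Qed.
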